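(* Let $G$ be a digraph. Then $G^{\top\bot}$ is congruence modular (i.e. has Gumm polymorphisms) if and only if $G^{\top\bot}$ is congruence distributive (i.e. has Jónsson polymorphisms).
   Context: Digraphs are finite and loopless: $G=(V,E)$ with $E\subseteq V\times V$. $G^{\top}$ is the digraph on $V\cup\{\top\}$ ($\top\notin V$ new) with edge set $E\cup\{(v,\top):v\in V\}$; $G^\bot$ is the digraph on $V\cup\{\bot\}$ with edge set $E\cup\{(\bot,v):v\in V\}$; $G^{\top\bot}=(G^\top)^\bot$. A polymorphism of arity $k$ is a map $f:V^k\to V$ with $(f(a_1,\dots,a_k),f(b_1,\dots,b_k))\in E$ whenever all $(a_i,b_i)\in E$. Gumm polymorphisms: ternary polymorphisms $s_0,\dots,s_{2n},p$ with $s_0(x,y,z)=x$; $s_i(x,y,x)=x$ for all $i\le 2n$; $s_i(x,y,y)=s_{i+1}(x,y,y)$ for even $i<2n$; $s_i(x,x,y)=s_{i+1}(x,x,y)$ for odd $i<2n$; $s_{2n}(x,y,y)=p(x,y,y)$; $p(x,x,y)=y$ (identically on the vertex set). Jónsson polymorphisms: ternary polymorphisms $J_0,\dots,J_n$ with $J_0(x,y,z)=x$; $J_i(x,y,x)=x$ for all $i\le n$; $J_i(x,x,y)=J_{i+1}(x,x,y)$ for even $i<n$; $J_i(x,y,y)=J_{i+1}(x,y,y)$ for odd $i<n$; $J_n(x,y,z)=z$. *)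

From mathcomp Require Import all_boot.
Set Implicit Arguments. Unset Strict Implicit. Unset Printing Implicit Defensive.

(* G^top : vertex set option T, with None the new vertex top;
   edges E together with (v, top) for every old vertex v. *)
Definition top_rel (T : Type) (E : rel T) : rel (option T) :=
  fun a b => match a, b with
             | Some x, Some y => E x y
             | Some _, None => true
             | None, _ => false
             end.

(* G^bot : vertex set option T, with None the new vertex bot;
   edges E together with (bot, v) for every old vertex v. *)
Definition bot_rel (T : Type) (E : rel T) : rel (option T) :=
  fun a b => match a, b with
             | Some x, Some y => E x y
             | None, Some _ => true
             | _, None => false
             end.

(* G^{top bot} = (G^top)^bot, on option (option T):
   Some (Some v) = v, Some None = top, None = bot. *)
Definition topbot_rel (T : Type) (E : rel T) : rel (option (option T)) :=
  bot_rel (top_rel E).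

Definition polymorphism3 (T : Type) (E : rel T) (f : T -> T -> T -> T) : Prop :=
  forall a1 a2 a3 b1 b2 b3 : T,
    E a1 b1 -> E a2 b2 -> E a3 b3 -> E (f a1 a2 a3) (f b1 b2 b3).

Definition has_gumm (T : Type) (E : rel T) : Prop :=
  exists (n : nat) (s : nat -> T -> T -> T -> T) (p : T -> T -> T -> T),
    ((forall i, i <= 2 * n -> polymorphism3 E (s i)) /\
        polymorphism3 E p /\
        (forall x y z, s 0 x y z = x) /\
        (forall i x y, i <= 2 * n -> s i x y x = x) /\
        (forall i x y, i < 2 * n -> ~~ odd i -> s i x y y = s i.+1 x y y) /\
        (forall i x y, i < 2 * n -> odd i -> s i x x y = s i.+1 x x y) /\
        (forall x y, s (2 * n) x y y = p x y y)
      /\ (forall x y, p x x y = y)).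

Definition has_jonsson (T : Type) (E : rel T) : Prop :=
  exists (n : nat) (J : nat -> T -> T -> T -> T),
    ((forall i, i <= n -> polymorphism3 E (J i)) /\
        (forall x y z, J 0 x y z = x) /\
        (forall i x y, i <= n -> J i x y x = x) /\
        (forall i x y, i < n -> ~~ odd i -> J i x x y = J i.+1 x x y) /\
        (forall i x y, i < n -> odd i -> J i x y y = J i.+1 x y y)
      /\ (forall x y z, J n x y z = z)).

(** A Jónsson chain J_0, ..., J_n gives the Gumm chain x, J_0, ..., J_n, z,
    ..., z with p(x,y,z) = z.  Conversely a Gumm chain s_0, ..., s_2n, p gives
    the Jónsson chain x, s_0, ..., s_2n, p, z as soon as p(x,y,x) = x.  In
    G^{⊤⊥} this can always be arranged: d(x,y,z) = (x if x = z, else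
    p(x,y,z)) is still a polymorphism, since a side with equal outer entries x
    can be compared through p(⊥,⊥,x) = x (⊥ points to every head of an edge)
    or p(⊤,⊤,x) = x (every tail of an edge points to ⊤). *)

From mathcomp Require Import all_boot zify.
Set Implicit Arguments. Unset Strict Implicit. Unset Printing Implicit Defensive.

Section Chains.
Variables (T : Type) (E : rel T).

Definition gumm_chain n (s : nat -> T -> T -> T -> T) (p : T -> T -> T -> T) : Prop :=
  ((forall i, i <= 2 * n -> polymorphism3 E (s i)) /\
      polymorphism3 E p /\
      (forall x y z, s 0 x y z = x) /\
      (forall i x y, i <= 2 * n -> s i x y x = x) /\
      (forall i x y, i < 2 * n -> ~~ odd i -> s i x y y = s i.+1 x y y) /\
      (forall i x y, i < 2 * n -> odd i -> s i x x y = s i.+1 x x y) /\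
      (forall x y, s (2 * n) x y y = p x y y)
    /\ (forall x y, p x x y = y)).

Lemma polymorphism3_proj1 : polymorphism3 E (fun x _ _ => x).
Proof. by move=> a1 a2 a3 b1 b2 b3. Qed.

Lemma polymorphism3_proj3 : polymorphism3 E (fun _ _ z => z).
Proof. by move=> a1 a2 a3 b1 b2 b3. Qed.

Lemma jonsson_gumm : has_jonsson E -> has_gumm E.
Proof.
move=> [n [J [hJ [J0 [Jxyx [Jev [Jod Jn]]]]]]].
pose Jt j := if j <= n then J j else fun _ _ z => z.
have Jt_tail j x y z : n <= j -> Jt j x y z = z.
  by rewrite /Jt; case: (leqP j n) => // ? ?; have -> : j = n by lia.
exists n.+1, (fun i => if i is j.+1 then Jt j else fun x _ _ => x), (fun _ _ z => z).
split; [|split; [exact: polymorphism3_proj3|split; [by []|split; [|split; [|split; [|split=> //]]]]]].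
- move=> [|j] _; first exact: polymorphism3_proj1.
  by rewrite /Jt; case: (leqP j n) => hj; [exact: hJ|exact: polymorphism3_proj3].
- move=> [|j] x y _ //=; rewrite /Jt; case: (leqP j n) => // hj; exact: Jxyx.
- move=> [|j] x y _ /= hev; first by rewrite /Jt leq0n J0.
  case: (ltnP j n) => hj; last by rewrite !Jt_tail //; lia.
  by rewrite /Jt (ltnW hj) hj Jod // -[odd j]negbK.
- move=> [|j] x y _ //= hod.
  case: (ltnP j n) => hj; last by rewrite !Jt_tail //; lia.
  by rewrite /Jt (ltnW hj) hj Jev.
- by move=> x y; rewrite mulnS /= Jt_tail //; lia.
Qed.

Lemma jonsson_of_gumm_chain n s p :
  gumm_chain n s p -> (forall x y, p x y x = x) -> has_jonsson E.
Proof.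
move=> [hs [hp [s0 [sxyx [sev [sod [s2n pxxy]]]]]]] pxyx.
exists (2 * n).+3, (fun i => if i is j.+1 then
  if j <= 2 * n then s j else if j == (2 * n).+1 then p else fun _ _ z => z
  else fun x _ _ => x).
split; [|split; [by []|split; [|split; [|split]]]].
- move=> [|j] _; first exact: polymorphism3_proj1.
  case: ifP => [hj|_]; first exact: hs.
  by case: ifP => _; [exact: hp|exact: polymorphism3_proj3].
- move=> [|j] x y _ //=; case: ifP => [hj|_]; first exact: sxyx.
  by case: ifP.
- move=> [|j] x y hj /= hev; first by rewrite s0.
  case: (ltngtP j (2 * n)) => hjn.
  + by rewrite sod // -[odd j]negbK.
  + have -> : j = (2 * n).+1 by lia.
    by rewrite eqxx (gtn_eqF (ltnSn _)) pxxy.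
  + by move: hev; rewrite hjn /= oddM.
- move=> [|j] x y hj //= hod.
  case: (ltngtP j (2 * n)) => hjn.
  + by rewrite sev.
  + have hj2 : j = (2 * n).+1 by lia.
    by move: hod; rewrite hj2 /= oddM.
  + by rewrite hjn eqxx s2n.
- by move=> x y z; rewrite ltnNge leqnSn /= (gtn_eqF (ltnSn _)).
Qed.
End Chains.

Section PinnedGummTerm.
Variables (T : eqType) (E : rel T) (bot top : T).
Hypothesis bot_edge : forall a b, E a b -> E bot b.
Hypothesis top_edge : forall a b, E a b -> E a top.

Definition pin_outer (p : T -> T -> T -> T) x y z := if x == z then x else p x y z.

Lemma pin_outer_xyx p x y : pin_outer p x y x = x.
Proof. by rewrite /pin_outer eqxx. Qed.

Section MaltsevLikeTerm.
Variables (p : T -> T -> T -> T).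
Hypothesis p_xxy : forall x y, p x x y = y.

Lemma pin_outer_xxy x y : pin_outer p x x y = y.
Proof. by rewrite /pin_outer; case: eqP => [->|]. Qed.

Lemma pin_outer_xyy x y : pin_outer p x y y = p x y y.
Proof. by rewrite /pin_outer; case: eqP => [->|]. Qed.

Lemma polymorphism3_pin_outer : polymorphism3 E p -> polymorphism3 E (pin_outer p).
Proof.
move=> hp a1 a2 a3 b1 b2 b3 h1 h2 h3; rewrite /pin_outer.
case: eqP => [ea|_]; case: eqP => [eb|_]; try subst a3; try subst b3 => //.
- by rewrite -(p_xxy bot a1); apply: hp => //; [apply: bot_edge h1|apply: bot_edge h2].
- by rewrite -(p_xxy top b1); apply: hp => //; [apply: top_edge h1|apply: top_edge h2].
- exact: hp.
Qed.
End MaltsevLikeTerm.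

Lemma gumm_chain_pin_outer n s p :
  gumm_chain E n s p -> gumm_chain E n s (pin_outer p).
Proof.
move=> [hs [hp [s0 [sxyx [sev [sod [s2n pxxy]]]]]]].
split; [by []|split; [exact: polymorphism3_pin_outer|]].
do 4!split=> //; split; last exact: pin_outer_xxy.
by move=> x y; rewrite pin_outer_xyy.
Qed.

Lemma gumm_jonsson_source_sink : has_gumm E -> has_jonsson E.
Proof.
move=> [n [s [p hchain]]].
apply: (jonsson_of_gumm_chain (gumm_chain_pin_outer hchain)).
exact: pin_outer_xyx.
Qed.
End PinnedGummTerm.

Lemma topbot_rel_bot (T : Type) (E : rel T) a b :
  topbot_rel E a b -> topbot_rel E None b.
Proof. by case: a b => [[a|]|] [[b|]|]. Qed.

Lemma topbot_rel_top (T : Type) (E : rel T) a b :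
  topbot_rel E a b -> topbot_rel E a (Some None).
Proof. by case: a b => [[a|]|] [[b|]|]. Qed.

Theorem theorem7p5 (V : finType) (E : rel V) (loopless : irreflexive E) :
  has_gumm (topbot_rel E) <-> has_jonsson (topbot_rel E).
Proof.
split; last exact: jonsson_gumm.
exact: (gumm_jonsson_source_sink (@topbot_rel_bot V E) (@topbot_rel_top V E)).
Qed.
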